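(* Let $K$ be an algebraically closed field of characteristic zero, let $\Phi=(f_1,\dots,f_n)$ be a polynomial automorphism of $K^n$, let $\deg_1$ be the standard homogeneous degree on $K[x_1,\dots,x_n]$, let $d_i=\deg_1(f_i)$, and let $\deg_2$ be the weighted degree on $K[x_1,\dots,x_n]$ assigning weight $d_i$ to $x_i$. Let $I=\{P : P(\overline{f_1},\dots,\overline{f_n})=0\}$ be the ideal of relations, where $\overline{f_i}$ is the homogeneous component of $f_i$ of highest degree. If $I$ is principal, $I=(R)$, then $\deg_2(R)\le d_1+\dots+d_n-n+1$.
   Context: $\deg_2(0)=-\infty$. *)

From HB Require Import structures.
From mathcomp Require Import all_boot all_order all_algebra.
From mathcomp Require Import mpoly.
Set Implicit Arguments. Unset Strict Implicit. Unset Printing Implicit Defensive.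
Import Order.TTheory GRing.Theory Num.Theory.
Local Open Scope ring_scope.

Definition poly_automorphism (K : comRingType) (n : nat)
  (f : n.-tuple {mpoly K[n]}) : Prop :=
  exists g : n.-tuple {mpoly K[n]},
    forall i : 'I_n, (tnth f i) \mPo g = 'X_i /\ (tnth g i) \mPo f = 'X_i.

Definition deg1 (K : ringType) (n : nat) (p : {mpoly K[n]}) : nat := (msize p).-1.

Definition top_comp (K : ringType) (n : nat) (p : {mpoly K[n]}) : {mpoly K[n]} :=
  \sum_(m <- msupp p | mdeg m == deg1 p) p@_m *: 'X_[m].

(* weighted degree with weight w i for x_i (meaningful for p <> 0;
   deg_2(0) = -oo is handled by requiring p <> 0 where used) *)
Definition wdeg (K : ringType) (n : nat) (w : 'I_n -> nat) (p : {mpoly K[n]}) : nat :=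
  \max_(m <- msupp p) \sum_(i < n) (m i * w i)%N.

From HB Require Import structures.
From mathcomp Require Import all_boot all_order all_algebra.
From mathcomp Require Import mpoly.
From mathcomp Require Import zify ring.
Import GRing.Theory.
Set Implicit Arguments. Unset Strict Implicit. Unset Printing Implicit Defensive.
Local Open Scope ring_scope.

(* Let d_i = deg f_i, let F be the tuple of leading forms of f, and write deg_2 P
   and P^+ for the degree and the leading form of P for the weights d_i; let D_i
   be the partial derivative along x_i.  The component of degree deg_2 P of P(f)
   is P^+(F), so deg P(f) >= deg_2 P as soon as P^+(F) <> 0.  Cramer's rule for
   the Jacobian matrix of f, whose determinant is nonzero, bounds
   deg (D_i P)(f) <= deg P(f) + (d_1 + ... + d_n) - d_i - n.
   Since R(F) = 0 and R is nonconstant, some (D_i0 R)(F) is nonzero: in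
   characteristic 0 some D_i0 R is nonzero, and it is too small to be a multiple
   of R.  If every leading form g_k^+ of the inverse g satisfied g_k^+(F) <> 0,
   then g_k^+(F) = x_k, so the Jacobian matrix of F would be invertible, which
   contradicts (grad R)(F) * J(F) = grad (R(F)) = 0.  Hence some g_k^+ = R^m Q
   with m >= 1 and Q(F) <> 0.  Differentiating g_k m times along x_i0 strips R^m
   off the leading form and yields deg_2 g_k + m n <= deg x_k + m (d_1 + ... + d_n),
   that is m (deg_2 R + n) <= 1 + m (d_1 + ... + d_n). *)

Definition mwdeg (n : nat) (w : 'I_n -> nat) (m : 'X_{1..n}) : nat :=
  (\sum_(i < n) m i * w i)%N.

Lemma mwdeg0 n w : @mwdeg n w 0%MM = 0%N.
Proof. by rewrite /mwdeg big1 // => i _; rewrite mnm0E. Qed.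

Lemma mwdegD n w : {morph @mwdeg n w : m1 m2 / (m1 + m2)%MM >-> (m1 + m2)%N}.
Proof.
by move=> m1 m2; rewrite /mwdeg -big_split; apply: eq_bigr => i _; rewrite mnmDE mulnDl.
Qed.

HB.instance Definition _ n w := isMeasure.Build n (@mwdeg n w) (@mwdeg0 n w) (@mwdegD n w).

Lemma mwdegU n w (i : 'I_n) : mwdeg w U_(i)%MM = w i.
Proof.
rewrite /mwdeg (bigD1 i) //= mnm1E eqxx mul1n big1 ?addn0 // => j ne_ji.
by rewrite mnm1E eq_sym (negbTE ne_ji).
Qed.

Lemma leq_pred_addl m k : (0 < m)%N -> (k <= (m + k).-1)%N.
Proof. by case: m => // m _; rewrite addSn leq_addl. Qed.

Lemma leq_pred_add m1 m2 k1 k2 :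
  (m1 <= k1)%N -> (m2 <= k2.+1)%N -> ((m1 + m2).-1 <= k1 + k2)%N.
Proof. by lia. Qed.

Section TopCoefficient.
Context (R : nzRingType).
Implicit Types (a b : {poly R}).

Lemma coef_neq0_ltn_size a k : a`_k != 0 -> (k < size a)%N.
Proof. by apply: contraR; rewrite -leqNgt => /leq_sizeP ->. Qed.

Lemma coefM_top a b i j : (size a <= i.+1)%N -> (size b <= j.+1)%N ->
  (size (a * b)%R <= (i + j).+1)%N /\ (a * b)`_(i + j) = a`_i * b`_j.
Proof.
move=> size_a size_b; split; first by apply: leq_trans (size_polyMleq a b) _; lia.
have lt_i : (i < (i + j).+1)%N by rewrite ltnS leq_addr.
rewrite coefM (bigD1 (Ordinal lt_i)) //= addKn big1 ?addr0 // => k ne_ki.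
case: (ltngtP k i) => [lt_ki|lt_ik|eq_ki].
- by rewrite [b`__]nth_default ?mulr0 //; apply: leq_trans size_b _; lia.
- by rewrite nth_default ?mul0r //; apply: leq_trans size_a _; lia.
- by move: ne_ki; rewrite -val_eqE /= eq_ki eqxx.
Qed.

Lemma coefXn_top a D k : (size a <= D.+1)%N ->
  (size (a ^+ k) <= (k * D).+1)%N /\ (a ^+ k)`_(k * D) = a`_D ^+ k.
Proof.
move=> size_a; elim: k => [|k [IHsize IHcoef]]; first by rewrite !expr0 size_poly1 coef1.
by rewrite !exprS mulSn -IHcoef; apply: coefM_top.
Qed.

Lemma coef_prod_top (I : Type) (r : seq I) (A : I -> {poly R}) (D : I -> nat) :
  (forall x, size (A x) <= (D x).+1)%N ->
  (size (\prod_(x <- r) A x)%R <= (\sum_(x <- r) D x).+1)%N /\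
  (\prod_(x <- r) A x)`_(\sum_(x <- r) D x) = \prod_(x <- r) (A x)`_(D x).
Proof.
move=> size_A; elim: r => [|x r [IHsize IHcoef]]; first by rewrite !big_nil size_poly1 coef1.
by rewrite !big_cons -IHcoef; apply: coefM_top.
Qed.

End TopCoefficient.

(* [grading mf p] is p(t^w_1 x_1, ..., t^w_n x_n) as a polynomial in t, where
   w_i is the mf-weight of x_i.  It is locked because unfolding [mmap] during
   unification is prohibitively slow. *)
HB.lock Definition grading (n : nat) (K : comNzRingType) (mf : measure n)
    (p : {mpoly K[n]}) : {poly {mpoly K[n]}} :=
  mmap (polyC \o @mpolyC n K) (fun i => ('X_i)%:P * 'X^(mf U_(i)%MM)) p.

Section Grading.
Context (n : nat) (K : comNzRingType) (mf : measure n).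
Implicit Types (p q : {mpoly K[n]}).

Lemma grading_is_additive : additive (@grading n K mf).
Proof. by move=> p q; rewrite unlock rmorphB. Qed.

HB.instance Definition _ := GRing.isAdditive.Build {mpoly K[n]} {poly {mpoly K[n]}}
  (@grading n K mf) grading_is_additive.

Lemma grading_is_multiplicative : multiplicative (@grading n K mf).
Proof. by split => [p q|]; rewrite unlock ?rmorphM ?rmorph1. Qed.

HB.instance Definition _ := GRing.isMultiplicative.Build {mpoly K[n]} {poly {mpoly K[n]}}
  (@grading n K mf) grading_is_multiplicative.

Local Notation grading := (@grading n K mf).

Lemma gradingC c : grading c%:MP = (c%:MP)%:P.
Proof. by rewrite unlock mmapC. Qed.

(* Like [deg1] and [wdeg], [mfdeg] vanishes on the zero polynomial. *)
Definition mfdeg p := (mmeasure mf p).-1.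

Definition mtop p := pihomog mf (mfdeg p) p.

Lemma mcoeff_pihomog d p m :
  (pihomog mf d p)@_m = if mf m == d then p@_m else 0.
Proof.
rewrite pihomogE raddf_sum /= big_mkcond /=.
case: (boolP (m \in msupp p)) => mp.
  rewrite (bigD1_seq m) //= ?msupp_uniq // big1 ?addr0.
    by rewrite mcoeffZ mcoeffX eqxx mulr1; case: (mf m == d).
  move=> m' /negbTE mm; case: ifP => _ //.
  by rewrite mcoeffZ mcoeffX mm mulr0.
rewrite big1; first by rewrite (memN_msupp_eq0 mp); case: ifP.
move=> m' _; case: ifP => _ //; rewrite mcoeffZ mcoeffX.
case: eqP => [em|]; last by rewrite mulr0.
by move: mp; rewrite em => /memN_msupp_eq0 ->; rewrite mul0r.
Qed.

Lemma grading_sumE p :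
  grading p = \sum_(m <- msupp p) (p@_m *: 'X_[m])%:P * 'X^(mf m).
Proof.
rewrite unlock; apply: eq_bigr => m _ /=; rewrite /mmap1.
under eq_bigr do rewrite exprMn -exprM.
rewrite big_split /= prodrXr.
under eq_bigr do rewrite -rmorphXn.
rewrite -rmorph_prod -mpolyXE_id mulrA -polyCM mul_mpolyC (mfE mf m).
by congr (_ * 'X^_); apply: eq_bigr => i _; rewrite mulnC.
Qed.

Lemma coef_grading p k : (grading p)`_k = pihomog mf k p.
Proof.
rewrite grading_sumE coef_sum pihomogE [RHS]big_mkcond /=; apply: eq_bigr => m _.
rewrite coefMXn coefC subn_eq0.
case: (ltngtP k (mf m)) => [lt|gt|eq];
  by rewrite ?eq ?(gtn_eqF lt) ?(ltn_eqF gt) ?leqNgt ?gt ?eqxx.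
Qed.

Lemma size_grading p : size (grading p) = mmeasure mf p.
Proof.
apply/eqP; rewrite eqn_leq; apply/andP; split.
  apply/leq_sizeP => k le_p_k; apply/mpolyP => m.
  rewrite coef_grading mcoeff_pihomog mcoeff0; case: eqP => // mf_m.
  by move: le_p_k; rewrite -mf_m => /mmeasure_mnm_ge /memN_msupp_eq0.
rewrite mmeasureE; apply/bigmax_leqP_seq => m mp _; apply: coef_neq0_ltn_size.
apply/eqP => /mpolyP /(_ m); rewrite coef_grading mcoeff_pihomog eqxx mcoeff0.
by apply/eqP; rewrite -mcoeff_msupp.
Qed.

Lemma lead_coef_grading p : lead_coef (grading p) = mtop p.
Proof. by rewrite lead_coefE size_grading coef_grading. Qed.

Lemma grading_eq0 p : (grading p == 0) = (p == 0).
Proof. by rewrite -size_poly_eq0 size_grading mmeasure_poly_eq0. Qed.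

Lemma mtop_eq0 p : (mtop p == 0) = (p == 0).
Proof. by rewrite -lead_coef_grading lead_coef_eq0 grading_eq0. Qed.

Lemma pihomog_eq0 k p : (mmeasure mf p <= k)%N -> pihomog mf k p = 0.
Proof. by move=> le_p_k; rewrite -coef_grading nth_default ?size_grading. Qed.

Lemma mfdeg_mtop p : mfdeg (mtop p) = mfdeg p.
Proof.
have [->|p_neq0] := eqVneq p 0; first by rewrite /mtop pihomog0.
have top_homog := pihomogP mf (mfdeg p) p.
by apply: (dhomog_uniq _ (dhomog_msize top_homog) top_homog); rewrite mtop_eq0.
Qed.

Lemma pihomog_mderiv k p i :
  pihomog mf k (p^`M(i)) = (pihomog mf (k + mf U_(i)%MM) p)^`M(i).
Proof.
apply/mpolyP => m; rewrite mcoeff_pihomog !mcoeff_mderiv mcoeff_pihomog.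
by rewrite mfD eqn_add2r; case: ifP; rewrite ?mul0rn.
Qed.

Lemma mtop_mderiv p i : (mtop p)^`M(i) != 0 ->
  (mfdeg (p^`M(i)) + mf U_(i)%MM = mfdeg p)%N /\ mtop (p^`M(i)) = (mtop p)^`M(i).
Proof.
move=> dtop_neq0; set W := mfdeg p; set w := mf U_(i)%MM.
have p_neq0 : p != 0.
  by apply: contraNneq dtop_neq0 => ->; rewrite /mtop pihomog0 mderiv0.
have w_le_W : (w <= W)%N.
  have [m] : exists m, m \in msupp ((mtop p)^`M(i)).
    move: dtop_neq0; rewrite -msupp_eq0.
    by case: msupp => // m s _; exists m; rewrite mem_head.
  rewrite mcoeff_msupp mcoeff_mderiv => dtop_m.
  have : (m + U_(i))%MM \in msupp (mtop p).
    by rewrite mcoeff_msupp; apply: contraNneq dtop_m => ->; rewrite mul0rn.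
  by move/(dhomog_mf (pihomogP mf W p)); rewrite mfD => <-; apply: leq_addl.
have top_dp : pihomog mf (W - w) (p^`M(i)) = (mtop p)^`M(i).
  by rewrite pihomog_mderiv subnK.
have deg_dp : mfdeg (p^`M(i)) = (W - w)%N.
  suff size_dp : mmeasure mf (p^`M(i)) = (W - w).+1 by rewrite /mfdeg size_dp.
  rewrite -size_grading; apply/eqP; rewrite eqn_leq; apply/andP; split.
    apply/leq_sizeP => k lt_k; rewrite coef_grading pihomog_mderiv.
    rewrite pihomog_eq0 ?mderiv0 // (mpolySpred mf p_neq0) -/(mfdeg p) -/W.
    by move: lt_k w_le_W; lia.
  by apply: coef_neq0_ltn_size; rewrite coef_grading top_dp.
by rewrite /mtop deg_dp subnK.
Qed.

Lemma mfdegM_proper p q :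
  mtop p * mtop q != 0 -> mfdeg (p * q) = (mfdeg p + mfdeg q)%N.
Proof.
move=> top_pq; have [p_neq0 q_neq0] : p != 0 /\ q != 0.
  by split; rewrite -mtop_eq0; apply: contraNneq top_pq => ->; rewrite ?mul0r ?mulr0 eqxx.
rewrite /mfdeg -(size_grading (p * q)) -(size_grading p) -(size_grading q).
rewrite rmorphM /= size_proper_mul.
  rewrite (size_grading p) (size_grading q).
  by rewrite (mpolySpred mf p_neq0) (mpolySpred mf q_neq0) addSn addnS.
by rewrite (lead_coef_grading p) (lead_coef_grading q).
Qed.

End Grading.

Section GradingDomain.
Context (n : nat) (K : idomainType) (mf : measure n).
Implicit Types (p q : {mpoly K[n]}).

Lemma mfdegM p q : p != 0 -> q != 0 -> mfdeg mf (p * q) = (mfdeg mf p + mfdeg mf q)%N.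
Proof. by move=> p_neq0 q_neq0; apply: mfdegM_proper; rewrite mulf_neq0 ?mtop_eq0. Qed.

Lemma mfdegX p k : p != 0 -> mfdeg mf (p ^+ k) = (k * mfdeg mf p)%N.
Proof.
move=> p_neq0; elim: k => [|k IH]; first by rewrite expr0 /mfdeg mmeasure1.
by rewrite exprS mfdegM ?expf_neq0 // IH mulSn.
Qed.

End GradingDomain.

Lemma wdegE n (K : comNzRingType) (w : 'I_n -> nat) (p : {mpoly K[n]}) :
  wdeg w p = mfdeg (mwdeg w) p.
Proof.
rewrite /wdeg /mfdeg mmeasureE (eq_bigr (mwdeg w)) //.
elim: (msupp p) => [|m s IH]; first by rewrite !big_nil.
by rewrite !big_cons IH; case: (\max_(_ <- s) _)%N => [|b] /=; lia.
Qed.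

Section Composition.
Context (n : nat) (K : comNzRingType) (f : n.-tuple {mpoly K[n]}).
Local Notation d := (fun i => deg1 (tnth f i)).
Local Notation F := [tuple top_comp (tnth f i) | i < n].

Lemma coef_grading_comp H :
  (grading mdeg (H \mPo f))`_(mfdeg (mwdeg d) H) = mtop (mwdeg d) H \mPo F.
Proof.
have top_monomial m : (size (grading mdeg ('X_[m] \mPo f)) <= (mwdeg d m).+1)%N /\
    (grading mdeg ('X_[m] \mPo f))`_(mwdeg d m) = 'X_[m] \mPo F.
  rewrite !comp_mpolyX rmorph_prod.
  under eq_bigr do rewrite rmorphXn.
  have size_f i : (size (grading mdeg (tnth f i)) <= (d i).+1)%N.
    by rewrite size_grading; apply: leqSpred.
  have [size_top coef_top] :=
    coef_prod_top (index_enum 'I_n) (fun i => (coefXn_top (m i) (size_f i)).1).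
  split; first exact: size_top.
  rewrite coef_top; apply: eq_bigr => i _.
  by rewrite (coefXn_top (m i) (size_f i)).2 coef_grading tnth_map tnth_ord_tuple.
rewrite comp_mpolyEX raddf_sum coef_sum /mtop pihomogE raddf_sum [RHS]big_mkcond /=.
apply: eq_big_seq => m m_in; rewrite -mul_mpolyC rmorphM /= gradingC coefCM comp_mpolyZ.
case: (eqVneq (mwdeg d m) (mfdeg (mwdeg d) H)) => [<-|ne_mH].
  by rewrite (top_monomial m).2 mul_mpolyC.
rewrite nth_default ?mulr0 //; apply: leq_trans (top_monomial m).1 _.
rewrite ltn_neqAle ne_mH -ltnS.
exact: leq_trans (mmeasure_mnm_lt (mwdeg d) m_in) (leqSpred _).
Qed.

Lemma msize_comp_gt H :
  mtop (mwdeg d) H \mPo F != 0 -> (mfdeg (mwdeg d) H < msize (H \mPo f))%N.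
Proof. by rewrite -coef_grading_comp -size_grading => /coef_neq0_ltn_size. Qed.

End Composition.

Lemma mderivXU n (K : nzRingType) (i j : 'I_n) :
  ('X_i : {mpoly K[n]})^`M(j) = (i == j)%:R.
Proof.
rewrite mderivX mnm1E; case: eqP => [<-|_]; last by rewrite scale0r.
have -> : (U_(i) - U_(i))%MM = 0%MM by apply/mnmP => k; rewrite mnmBE mnm0E subnn.
by rewrite mpolyX0 scale1r.
Qed.

Lemma mderiv_exprS n (K : comNzRingType) (p : {mpoly K[n]}) i k :
  (p ^+ k.+1)^`M(i) = k.+1%:R * p ^+ k * p^`M(i).
Proof.
elim: k => [|k IH]; first by rewrite expr1 expr0 mulr1 mul1r.
by rewrite exprS mderivM IH exprS -[k.+2]addn1 -[k.+1]addn1 !natrD; ring.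
Qed.

Lemma mderivs_eq0_msize n (K : idomainType) (p : {mpoly K[n]}) :
  [pchar K] =i pred0 -> (forall i, p^`M(i) = 0) -> (msize p <= 1)%N.
Proof.
move=> char0 dp_eq0; rewrite msizeE; apply/bigmax_leqP_seq => m m_in _.
rewrite ltnS leqn0 mdeg_eq0; apply/eqP/mnmP => i; rewrite mnm0E.
apply: contraTeq m_in => m_i; rewrite mcoeff_msupp negbK.
have /mpolyP /(_ (m - U_(i))%MM) := dp_eq0 i.
rewrite mcoeff_mderiv submK ?lep1mP // mcoeff0 => /eqP.
by rewrite -mulr_natr mulf_eq0 (pcharf0P K).1 // orbF.
Qed.

Lemma comp_mpolyA n k l (K : comNzRingType) (P : {mpoly K[n]})
  (f : n.-tuple {mpoly K[k]}) (g : k.-tuple {mpoly K[l]}) :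
  (P \mPo f) \mPo g = P \mPo [tuple tnth f i \mPo g | i < n].
Proof.
rewrite [P \mPo f]comp_mpolyE [RHS]comp_mpolyE.
rewrite (big_morph (comp_mpoly g) (comp_mpolyD g) (comp_mpoly0 g)); apply: eq_bigr => m _.
rewrite comp_mpolyZ rmorph_prod; congr (_ *: _); apply: eq_bigr => i _.
by rewrite rmorphXn tnth_map tnth_ord_tuple.
Qed.

Section ChainRule.
Context (n k : nat) (K : comNzRingType) (f : n.-tuple {mpoly K[k]}).

Lemma mderiv_comp (P : {mpoly K[n]}) (l : 'I_k) :
  (P \mPo f)^`M(l) = \sum_(j < n) (P^`M(j) \mPo f) * (tnth f j)^`M(l).
Proof.
pose chain P := (P \mPo f)^`M(l) = \sum_(j < n) (P^`M(j) \mPo f) * (tnth f j)^`M(l).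
have chainC c : chain c%:MP.
  by rewrite /chain comp_mpolyC mderivC big1 // => j _; rewrite mderivC comp_mpoly0 mul0r.
have chainD P1 P2 : chain P1 -> chain P2 -> chain (P1 + P2).
  rewrite /chain => chain1 chain2; rewrite raddfD mderivD chain1 chain2 -big_split /=.
  by apply: eq_bigr => j _; rewrite mderivD raddfD mulrDl.
have chainM P1 P2 : chain P1 -> chain P2 -> chain (P1 * P2).
  rewrite /chain => chain1 chain2; rewrite rmorphM mderivM chain1 chain2.
  rewrite mulr_suml mulr_sumr -big_split /=; apply: eq_bigr => j _.
  by rewrite mderivM rmorphD !rmorphM /=; ring.
have chainX i : chain 'X_i.
  rewrite /chain comp_mpolyXU -tnth_nth (bigD1 i) //= big1 ?addr0 => [|j ne_ji].
    by rewrite mderivXU eqxx comp_mpoly1 mul1r.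
  by rewrite mderivXU eq_sym (negbTE ne_ji) comp_mpoly0 mul0r.
rewrite [P]mpolyE; elim/big_rec: _ => [|m Q _ chainQ].
  by rewrite -mpolyC0; apply: chainC.
apply: chainD chainQ; rewrite -mul_mpolyC mpolyXE_id; apply: (chainM); first exact: chainC.
elim/big_rec: _ => [|i Q' _ chainQ']; first by rewrite -mpolyC1; apply: chainC.
apply: (chainM) chainQ'; elim: (m i) => [|e IH].
  by rewrite expr0 -mpolyC1; apply: chainC.
by rewrite exprS; apply: (chainM).
Qed.

End ChainRule.

Section MSize.
Context (n : nat) (K : comNzRingType).
Implicit Types (P Q : {mpoly K[n]}).

Lemma msize_mderiv P i : (msize (P^`M(i)) <= (msize P).-1)%N.
Proof.
rewrite msizeE; apply/bigmax_leqP_seq => m; rewrite mcoeff_msupp mcoeff_mderiv => dP_m _.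
have : P@_(m + U_(i)) != 0 by apply: contraNneq dP_m => ->; rewrite mul0rn.
rewrite -mcoeff_msupp => /msize_mdeg_lt; rewrite mdegD mdeg1 addn1.
by case: (msize P).
Qed.

Lemma msizeM_le_pred P Q : (msize (P * Q) <= (msize P + msize Q).-1)%N.
Proof.
have [->|P_neq0] := eqVneq P 0; first by rewrite mul0r msize0.
have [->|Q_neq0] := eqVneq Q 0; first by rewrite mulr0 msize0.
have [->|PQ_neq0] := eqVneq (P * Q) 0; first by rewrite msize0.
rewrite -!mlead_deg // !(addSn, addnS) /= ltnS.
by have /lemc_mdeg := mleadM_le P Q; rewrite mdegD.
Qed.

Lemma msize_prod_le (I : Type) (r : seq I) (G : I -> {mpoly K[n]}) (e : I -> nat) :
  (forall x, msize (G x) <= (e x).+1)%N ->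
  (msize (\prod_(x <- r) G x)%R <= (\sum_(x <- r) e x).+1)%N.
Proof.
move=> size_G; elim: r => [|x r IH]; first by rewrite !big_nil msize1.
rewrite !big_cons; apply: leq_trans (msizeM_le_pred _ _) _.
by move: (size_G x) IH; lia.
Qed.

Lemma msize_sign_mul k P : msize ((-1) ^+ k * P) = msize P.
Proof. by rewrite -signr_odd; case: odd; rewrite ?expr1 ?expr0 ?mulN1r ?mul1r ?msizeN. Qed.

Lemma msize_det_le m (B : 'M[{mpoly K[n]}]_m) (e : 'I_m -> nat) :
  (forall i j, msize (B i j) <= (e i).+1)%N -> (msize (\det B) <= (\sum_i e i).+1)%N.
Proof.
move=> size_B; apply: leq_trans (msize_sum _ _ _) _; apply/bigmax_leqP => s _.
by rewrite msize_sign_mul; apply: msize_prod_le => i; apply: size_B.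
Qed.

End MSize.

Section Jacobian.
Context (n : nat) (K : comNzRingType).
Implicit Types (P : {mpoly K[n]}) (f g : n.-tuple {mpoly K[n]}).

Definition jacobian f : 'M[{mpoly K[n]}]_n := \matrix_(j, l) (tnth f j)^`M(l).

Lemma mul_row_jacobian P f :
  \row_j (P^`M(j) \mPo f) *m jacobian f = \row_l (P \mPo f)^`M(l).
Proof.
by apply/rowP => l; rewrite !mxE mderiv_comp; apply: eq_bigr => j _; rewrite !mxE.
Qed.

Lemma det_jacobian_mderiv_comp P f i :
  \det (jacobian f) * (P^`M(i) \mPo f) =
    \sum_l (P \mPo f)^`M(l) * \adj (jacobian f) l i.
Proof.
have := congr1 (fun M => M *m \adj (jacobian f)) (mul_row_jacobian P f).
rewrite /= -mulmxA mul_mx_adj mul_mx_scalar.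
move=> /(congr1 (fun M : 'rV[{mpoly K[n]}]_n => M 0 i)).
by rewrite !mxE => ->; apply: eq_bigr => l _; rewrite mxE.
Qed.

Lemma det_jacobian_neq0 f g :
  (forall i, tnth g i \mPo f = 'X_i) -> \det (jacobian f) != 0.
Proof.
move=> gf; pose G := \matrix_(i, j) ((tnth g i)^`M(j) \mPo f).
have GJ : G *m jacobian f = 1%:M.
  apply/matrixP => i l; rewrite !mxE.
  under eq_bigr do rewrite !mxE.
  by rewrite -mderiv_comp gf mderivXU.
apply/eqP => det0; have := congr1 determinant GJ.
by rewrite det_mulmx det0 mulr0 det1 => /eqP; rewrite eq_sym oner_eq0.
Qed.

Lemma msize_adj_jacobian f (i l : 'I_n) :
  (msize (\adj (jacobian f) l i) <= (\sum_(r < n.-1) (deg1 (tnth f (lift i r))).-1).+1)%N.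
Proof.
rewrite mxE /cofactor msize_sign_mul; apply: msize_det_le => r c.
by rewrite !mxE; apply: leq_trans (msize_mderiv _ _) (leqSpred _).
Qed.

End Jacobian.

Section DerivativeBound.
Context (n : nat) (K : idomainType) (f : n.-tuple {mpoly K[n]}).
Local Notation d := (fun i => deg1 (tnth f i)).
Hypothesis deg1_gt0 : forall j, (0 < d j)%N.
Hypothesis det_neq0 : \det (jacobian f) != 0.

Lemma msize_mderiv_comp (P : {mpoly K[n]}) (i : 'I_n) :
  P^`M(i) \mPo f != 0 ->
  (msize (P^`M(i) \mPo f) + d i + n <= msize (P \mPo f) + \sum_j d j)%N.
Proof.
move=> dP_neq0; set h := P \mPo f.
set S := (\sum_(r < n.-1) (d (lift i r)).-1)%N.
have cramer := det_jacobian_mderiv_comp P f i; rewrite -/h in cramer.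
have h_neq0 : (0 < msize h)%N.
  rewrite lt0n msize_poly_eq0; apply: contraNneq dP_neq0 => h_eq0.
  rewrite -(mulrI_eq0 _ (lregP det_neq0)) cramer.
  by rewrite big1 // => l _; rewrite h_eq0 mderiv0 mul0r.
have le_dP : (msize (P^`M(i) \mPo f) <= (msize h).-1 + S)%N.
  apply: leq_trans (_ : _ <= msize (\det (jacobian f) * (P^`M(i) \mPo f)))%N _.
    by rewrite msizeM // leq_pred_addl // lt0n msize_poly_eq0.
  rewrite cramer; apply: leq_trans (msize_sum _ _ _) _; apply/bigmax_leqP => l _.
  apply: leq_trans (msizeM_le_pred _ _) _; apply: leq_pred_add.
    exact: msize_mderiv.
  exact: msize_adj_jacobian.
have sum_d : (\sum_j d j = d i + (S + n.-1))%N.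
  rewrite (bigD1_ord i) //=; congr (_ + _)%N.
  rewrite /S -[X in (_ + X)%N]card_ord -sum1_card -big_split /=.
  by apply: eq_bigr => r _; have := deg1_gt0 (lift i r); lia.
have n_gt0 : (0 < n)%N by apply: leq_ltn_trans (ltn_ord i).
by rewrite sum_d; move: le_dP h_neq0; lia.
Qed.

End DerivativeBound.

Section Main.
Context (n : nat) (K : idomainType) (f g : n.-tuple {mpoly K[n]}) (R : {mpoly K[n]}).
Local Notation d := (fun i => deg1 (tnth f i)).
Local Notation S := (\sum_(i < n) deg1 (tnth f i))%N.
Local Notation F := [tuple top_comp (tnth f i) | i < n].
Local Notation degd := (mfdeg (mwdeg d)).
Local Notation topd := (mtop (mwdeg d)).
Hypothesis char0 : [pchar K] =i pred0.
Hypothesis fg : forall i, tnth f i \mPo g = 'X_i.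
Hypothesis gf : forall i, tnth g i \mPo f = 'X_i.
Hypothesis relations : forall P, P \mPo F = 0 <-> exists Q, P = R * Q.
Hypothesis R_neq0 : R != 0.

Lemma comp_f_eq0 P : P \mPo f = 0 -> P = 0.
Proof.
move=> Pf_eq0; rewrite -(comp_mpoly_id P).
have -> : [tuple 'X_i | i < n] = [tuple tnth f i \mPo g | i < n].
  by apply: eq_from_tnth => i; rewrite !tnth_map !tnth_ord_tuple fg.
by rewrite -comp_mpolyA Pf_eq0 comp_mpoly0.
Qed.

Lemma deg1_f_gt0 i : (0 < d i)%N.
Proof.
suff : (1 < msize (tnth f i))%N by rewrite /deg1; case: (msize _) => [|[]].
rewrite ltnNge; apply/negP => /msize1_polyC fi_const.
have := fg i; rewrite fi_const comp_mpolyC => /(congr1 (fun p => msize p)).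
by rewrite msizeC msizeX mdeg1; case: (_ != 0).
Qed.

Lemma R_comp_F : R \mPo F = 0.
Proof. by apply/relations; exists 1; rewrite mulr1. Qed.

Lemma msize_R_gt1 : (1 < msize R)%N.
Proof.
rewrite ltnNge; apply/negP => /msize1_polyC R_const.
by move: R_neq0 R_comp_F; rewrite R_const comp_mpolyC => /negP nz /eqP.
Qed.

Lemma mderiv_R_comp_F : exists i, R^`M(i) \mPo F != 0.
Proof.
have /existsP [i dR_neq0] : [exists i, R^`M(i) != 0].
  apply: contraT; rewrite negb_exists => /forallP dR_eq0.
  have := mderivs_eq0_msize char0 (fun i => eqP (negbNE (dR_eq0 i))).
  by rewrite leqNgt msize_R_gt1.
exists i; apply/negP => /eqP /relations [Q dR_eq].
have Q_neq0 : Q != 0 by apply: contraNneq dR_neq0 => Q_eq0; rewrite dR_eq Q_eq0 mulr0.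
have : (msize (R * Q) <= (msize R).-1)%N by rewrite -dR_eq; apply: msize_mderiv.
rewrite msizeM //; have : msize Q != 0%N by rewrite msize_poly_eq0.
by have := msize_R_gt1; lia.
Qed.

Lemma relation_power_factor T : T != 0 -> exists m Q, T = R ^+ m * Q /\ Q \mPo F != 0.
Proof.
elim: {T}(msize T) {-2}T (leqnn (msize T)) => [|N IH] T size_T T_neq0.
  by move: T_neq0; rewrite -msize_poly_eq0 -leqn0 size_T.
have [/relations [Q1 T_eq]|TF_neq0] := eqVneq (T \mPo F) 0; last first.
  by exists 0%N, T; rewrite expr0 mul1r.
have Q1_neq0 : Q1 != 0 by apply: contraNneq T_neq0 => Q1_eq0; rewrite T_eq Q1_eq0 mulr0.
have [|m [Q [Q1_eq QF_neq0]]] := IH Q1 _ Q1_neq0.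
  by move: size_T; rewrite T_eq msizeM //; have := msize_R_gt1; lia.
by exists m.+1, Q; rewrite T_eq Q1_eq exprS mulrA.
Qed.

Lemma msize_comp_lower_bound i0 m P Q :
  R^`M(i0) \mPo F != 0 -> topd P = R ^+ m * Q -> Q \mPo F != 0 ->
  (degd P + m * n < msize (P \mPo f) + m * S)%N.
Proof.
move=> dR_F; elim: m P Q => [|m IH] P Q top_P QF_neq0.
  by rewrite !mul0n !addn0; apply: msize_comp_gt; rewrite top_P expr0 mul1r.
(* D_i0 turns the leading form R^(m+1) Q into R^m Q1 with
   Q1(F) = (m+1) (D_i0 R)(F) Q(F) <> 0. *)
set Q1 := m.+1%:R * R^`M(i0) * Q + R * Q^`M(i0).
have dtop_P : (topd P)^`M(i0) = R ^+ m * Q1.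
  by rewrite top_P mderivM mderiv_exprS /Q1 exprS; ring.
have Q1F_neq0 : Q1 \mPo F != 0.
  rewrite /Q1 rmorphD !rmorphM /= R_comp_F mul0r addr0 !mulf_neq0 //.
  by rewrite rmorph_nat -mpolyC_nat mpolyC_eq0 (pcharf0P K).1.
have dtop_neq0 : (topd P)^`M(i0) != 0.
  rewrite dtop_P mulf_neq0 ?expf_neq0 //.
  by apply: contraNneq Q1F_neq0 => ->; rewrite comp_mpoly0.
have [deg_dP top_dP] := mtop_mderiv dtop_neq0.
have deg_P : (degd (P^`M(i0)) + d i0 = degd P)%N by rewrite -(mwdegU d i0).
have IH_dP : (degd (P^`M(i0)) + m * n < msize (P^`M(i0) \mPo f) + m * S)%N.
  by apply: IH Q1F_neq0; rewrite top_dP.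
have dPf_neq0 : P^`M(i0) \mPo f != 0.
  apply: contra_neq dtop_neq0 => /comp_f_eq0 dP_eq0.
  by rewrite -top_dP dP_eq0 /mtop pihomog0.
have bound_dP : (msize (P^`M(i0) \mPo f) + d i0 + n <= msize (P \mPo f) + S)%N.
  exact: msize_mderiv_comp deg1_f_gt0 (det_jacobian_neq0 gf) _ _ dPf_neq0.
by rewrite !mulSn; move: deg_P IH_dP bound_dP; lia.
Qed.

Lemma top_inverse_relation : exists k, topd (tnth g k) \mPo F = 0.
Proof.
have [i0 dR_F] := mderiv_R_comp_F.
have /existsP [k /eqP top_gk] : [exists k, topd (tnth g k) \mPo F == 0].
  (* Otherwise the leading forms of g invert F. *)
  apply: contraT; rewrite negb_exists => /forallP top_neq0.
  have F_inverse k : tnth [tuple topd (tnth g k) | k < n] k \mPo F = 'X_k.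
    have := coef_grading_comp f (tnth g k).
    rewrite gf coef_grading pihomogX tnth_map tnth_ord_tuple.
    by case: eqP => [_ <-|_ top_gk] //; move: (top_neq0 k); rewrite -top_gk eqxx.
  have := det_jacobian_mderiv_comp R F i0; rewrite R_comp_F.
  rewrite big1 => [/eqP|l _]; last by rewrite mderiv0 mul0r.
  by rewrite mulf_eq0 (negbTE (det_jacobian_neq0 F_inverse)) (negbTE dR_F).
by exists k.
Qed.

Lemma wdeg_relation_bound : (wdeg d R + n <= S + 1)%N.
Proof.
have [i0 dR_F] := mderiv_R_comp_F.
have [k top_gk] := top_inverse_relation.
have g_neq0 : tnth g k != 0.
  apply/eqP => g_eq0; have := gf k; rewrite g_eq0 comp_mpoly0.
  by move/(congr1 (fun p => msize p)); rewrite msize0 msizeX.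
have [m [Q [top_eq QF_neq0]]] : exists m Q, topd (tnth g k) = R ^+ m * Q /\ Q \mPo F != 0.
  by apply: relation_power_factor; rewrite mtop_eq0.
have Q_neq0 : Q != 0 by apply: contraNneq QF_neq0 => ->; rewrite comp_mpoly0.
have m_gt0 : (0 < m)%N.
  rewrite lt0n; apply: contraNneq QF_neq0 => m_eq0.
  by rewrite -top_gk top_eq m_eq0 expr0 mul1r.
have deg_g : degd (tnth g k) = (m * degd R + degd Q)%N.
  by rewrite -mfdeg_mtop top_eq mfdegM ?expf_neq0 // mfdegX.
have := msize_comp_lower_bound dR_F top_eq QF_neq0.
rewrite gf msizeX mdeg1 deg_g wdegE; nia.
Qed.

End Main.

Theorem theorem2 (K : closedFieldType) (n : nat) (f : n.-tuple {mpoly K[n]})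
  (R : {mpoly K[n]}) :
  [pchar K] =i pred0 ->
  poly_automorphism f ->
  (forall P : {mpoly K[n]},
     P \mPo [tuple top_comp (tnth f i) | i < n] = 0 <->
     exists Q : {mpoly K[n]}, P = R * Q) ->
  R != 0 ->
  (wdeg (fun i => deg1 (tnth f i)) R : int)
    <= (\sum_(i < n) deg1 (tnth f i))%N%:Z - n%:Z + 1.
Proof.
move=> char0 [g inverse] relations R_neq0.
have fg i := (inverse i).1; have gf i := (inverse i).2.
have := wdeg_relation_bound char0 fg gf relations R_neq0.
by move: (wdeg _ R) (\sum_(i < n) _)%N => a b; lia.
Qed.
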